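(* Let $p>3$ be a prime, $n$ a positive integer, $d=\frac{p^n+3}{2}$ and $F(x)=x^d$ on $\mathrm{GF}(p^n)$, and let $c=-1$. If $p^n\equiv1\pmod4$ then ${}_c\Delta_F\le4$, and if $p^n\equiv3\pmod4$ then ${}_c\Delta_F\le3$.
   Context: For a function $F:\mathrm{GF}(p^n)\to\mathrm{GF}(p^n)$ and $a,b,c\in\mathrm{GF}(p^n)$, let ${}_c\Delta_F(a,b)=\#\{x\in\mathrm{GF}(p^n): F(x+a)-cF(x)=b\}$. The $c$-differential uniformity of $F$ is ${}_c\Delta_F=\max\{{}_c\Delta_F(a,b): a,b\in\mathrm{GF}(p^n),\ \text{and } a\neq 0 \text{ if } c=1\}$. *)

From HB Require Import structures.
From mathcomp Require Import all_boot all_order all_algebra all_field.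
Set Implicit Arguments. Unset Strict Implicit. Unset Printing Implicit Defensive.
Import GRing.Theory.
Local Open Scope ring_scope.

Definition cDelta (K : finFieldType) (F : K -> K) (c a b : K) : nat :=
  #|[set x : K | F (x + a) - c * F x == b]|.

Definition cDU (K : finFieldType) (F : K -> K) (c : K) : nat :=
  \max_(ab : K * K | (c != 1) || (ab.1 != 0)) cDelta F c ab.1 ab.2.

From HB Require Import structures.
From mathcomp Require Import all_boot all_order all_algebra all_field.
From mathcomp Require Import fingroup cyclic ring zify.
Import GRing.Theory.
Local Open Scope ring_scope.

(* Write q = #|K| and m = (q - 1)/2, so that x ^+ m is the quadratic character
   chi of K and F x = x ^+ (m + 2) = chi(x) x^2.  Since F is a power map, the
   substitution x = a y turns F(x + a) + F(x) = b into F(y + 1) + F(y) = b', and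
   on the solutions y for which chi(y + 1) and chi(y) have prescribed signs this
   is one of the equations +-(y + 1)^2 +- y^2 = b'.  With equal signs it has at
   most the two solutions y and -1 - y, with opposite signs at most one.  Two
   solutions from different sign classes are related through y(y + 1), and the
   multiplicativity of chi shows that certain classes cannot both be inhabited;
   when chi(-1) = -1 the reflection y |-> -1 - y moreover leaves its sign class,
   so each class has at most one solution.  The case a = 0 is +-2x^2 = b. *)

Lemma natr_card_finField (K : finFieldType) : #|K|%:R = 0 :> K.
Proof. by rewrite -cardsT -FinRing.zmodXgE (expg_cardG (in_setT (1 : K))). Qed.

Lemma cDelta_pow_scale (K : finFieldType) (d : nat) (c a b : K) : a != 0 ->
  cDelta (fun x => x ^+ d) c a b = cDelta (fun x => x ^+ d) c 1 (b / a ^+ d).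
Proof.
move=> a0; rewrite /cDelta -(card_preimset _ (mulfI a0)); apply: eq_card => y.
have ad0 : a ^+ d != 0 by rewrite expf_neq0.
rewrite !inE (_ : a * y + a = a * (y + 1)); last by ring.
rewrite !exprMn mulrCA -mulrBr.
by apply/eqP/eqP => [<-|->]; [rewrite (mulrC (a ^+ d)) mulfK | rewrite mulrC divfK].
Qed.

Lemma cDU_leq (K : finFieldType) (F : K -> K) (c : K) (N : nat) :
  (forall a b, cDelta F c a b <= N)%N -> (cDU F c <= N)%N.
Proof. by move=> le_N; apply/bigmax_leqP => ab _; apply: le_N. Qed.

Lemma card_le2_of {T : finType} {A : {set T}} (f : T -> T) :
  (forall x y, x \in A -> y \in A -> y = x \/ y = f x) -> (#|A| <= 2)%N.
Proof.
move=> Af; have [->|[x Ax]] := set_0Vmem A; first by rewrite cards0.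
apply: leq_trans (_ : #|[set x; f x]| <= 2)%N; last by rewrite cards2; case: (_ != _).
apply/subset_leq_card/subsetP => y Ay.
by rewrite !inE; case: (Af _ _ Ax Ay) => ->; rewrite eqxx ?orbT.
Qed.

Lemma cards0_of_excl {T : finType} {A B : {set T}} :
  (forall x y, x \in A -> y \in B -> False) -> #|A| = 0%N \/ #|B| = 0%N.
Proof.
move=> AB; have [->|[x Ax]] := set_0Vmem A; first by left; rewrite cards0.
right; apply/eqP; rewrite cards_eq0 -subset0; apply/subsetP => y By.
by case: (AB _ _ Ax By).
Qed.

Section ShiftedSquares.

Context {R : idomainType}.
Hypothesis two_neq0 : (2 : R) != 0.

Lemma eq_sqrDsqr_shift {y z : R} :
  (y + 1) ^+ 2 + y ^+ 2 = (z + 1) ^+ 2 + z ^+ 2 -> z = y \/ z = - 1 - y.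
Proof.
move=> /eqP; rewrite -subr_eq0.
have -> : (y + 1) ^+ 2 + y ^+ 2 - ((z + 1) ^+ 2 + z ^+ 2) = (y - z) * (y + z + 1) * 2.
  by ring.
rewrite !mulf_eq0 (negbTE two_neq0) orbF subr_eq0 => /orP[/eqP->|]; first by left.
move=> /eqP yz1; right; rewrite -[RHS]addr0 -yz1; ring.
Qed.

Lemma eq_sqrBsqr_shift {y z : R} :
  (y + 1) ^+ 2 - y ^+ 2 = (z + 1) ^+ 2 - z ^+ 2 -> z = y.
Proof.
have sqrBsqr (x : R) : (x + 1) ^+ 2 - x ^+ 2 = 2 * x + 1 by ring.
by rewrite !sqrBsqr => /addIr/(mulfI two_neq0).
Qed.

Lemma sqrDsqr_shift_eq_sqrB {y z : R} :
  (y + 1) ^+ 2 + y ^+ 2 = (z + 1) ^+ 2 - z ^+ 2 -> z = y * (y + 1).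
Proof.
move=> E; apply: (mulfI two_neq0); apply: (addIr 1).
have -> : 2 * z + 1 = (z + 1) ^+ 2 - z ^+ 2 by ring.
by rewrite -E; ring.
Qed.

Lemma sqrDsqr_shift_eq_sqrBN {y z : R} :
  (y + 1) ^+ 2 + y ^+ 2 = z ^+ 2 - (z + 1) ^+ 2 -> z + 1 = - (y * (y + 1)).
Proof.
move=> E; have -> : z + 1 = - (- 1 - z) by ring.
congr (- _); apply: sqrDsqr_shift_eq_sqrB; rewrite E; ring.
Qed.

End ShiftedSquares.

Section QuadraticCharacterPower.

Context {K : finFieldType}.
Hypothesis oddK : odd #|K|.

Local Notation m := #|K|./2.
Local Notation F := (fun x : K => x ^+ (m + 2)).

Lemma card_oddE : #|K| = (m.*2).+1.
Proof. by rewrite -[LHS]odd_double_half oddK. Qed.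

Lemma two_neq0 : (2 : K) != 0.
Proof.
apply/eqP => two0; have := natr_card_finField K.
rewrite card_oddE -addn1 -muln2 natrD natrM two0 mulr0 add0r.
by move/eqP; rewrite oner_eq0.
Qed.

Lemma one_neq_m1 : (1 : K) != -1.
Proof. by rewrite -addr_eq0 two_neq0. Qed.

Lemma half_card_gt0 : (0 < m)%N.
Proof. by have := finNzRing_gt1 K; rewrite card_oddE; lia. Qed.

Lemma qchar_sqr (x : K) : x != 0 -> (x ^+ m) ^+ 2 = 1.
Proof.
move=> x0; apply: (mulIf x0).
by rewrite mul1r -exprM -exprSr muln2 -card_oddE expf_card.
Qed.

(* By Euler's criterion, x is a non-square exactly when x ^+ m = -1. *)
Definition nonsquare (x : K) : bool := x ^+ m == -1.

Lemma sign_eqN1 (s : bool) : ((-1) ^+ s == -1 :> K) = s.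
Proof. by case: s; rewrite ?expr1 ?eqxx // expr0 (negbTE one_neq_m1). Qed.

Lemma nonsquare0 : nonsquare 0 = false.
Proof. by rewrite /nonsquare expr0n gtn_eqF ?half_card_gt0 // eq_sym oppr_eq0 oner_eq0. Qed.

Lemma nonsquare_neq0 (x : K) : nonsquare x -> x != 0.
Proof. by apply: contraTneq => ->; rewrite nonsquare0. Qed.

Lemma qchar_sign (x : K) : x != 0 -> x ^+ m = (-1) ^+ nonsquare x.
Proof.
move=> x0; have /eqP := qchar_sqr x x0; rewrite sqrf_eq1 /nonsquare.
by case/orP => /eqP->; rewrite ?eqxx // (negbTE one_neq_m1).
Qed.

Lemma nonsquareM (x y : K) : x != 0 -> y != 0 ->
  nonsquare (x * y) = nonsquare x (+) nonsquare y.
Proof.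
by move=> x0 y0; rewrite {1}/nonsquare exprMn !qchar_sign // -signr_addb sign_eqN1.
Qed.

Lemma squareM {x y : K} : ~~ nonsquare x -> ~~ nonsquare y -> ~~ nonsquare (x * y).
Proof.
have [->|x0] := eqVneq x 0; first by rewrite mul0r nonsquare0.
have [->|y0] := eqVneq y 0; first by rewrite mulr0 nonsquare0.
by rewrite nonsquareM // => /negbTE-> /negbTE->.
Qed.

Lemma nonsquareN (x : K) : x != 0 -> nonsquare (- x) = nonsquare (-1) (+) nonsquare x.
Proof. by move=> x0; rewrite -[- x]mulN1r nonsquareM // oppr_eq0 oner_eq0. Qed.

Lemma nonsquareN_even (x : K) : ~~ nonsquare (-1) -> nonsquare (- x) = nonsquare x.
Proof.
have [->|x0] := eqVneq x 0; first by rewrite oppr0.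
by rewrite nonsquareN // => /negbTE->.
Qed.

Lemma nonsquareN1E : nonsquare (-1) = (#|K| %% 4 == 3)%N.
Proof.
rewrite /nonsquare -signr_odd sign_eqN1 [in RHS]card_oddE.
by case: (odd m) (modn2 m) => /= hm; apply/esym; [apply/eqP | apply/negbTE/eqP]; lia.
Qed.

Lemma pow_sign (x : K) : x ^+ (m + 2) = (-1) ^+ nonsquare x * x ^+ 2.
Proof.
rewrite exprD; have [->|x0] := eqVneq x 0; last by rewrite qchar_sign.
by rewrite expr2 !mulr0.
Qed.

(* [sols1 u v b] (resp. [sols0 v b]) is the set of solutions of
   F (y + 1) + F y = b (resp. F x + F x = b) on which the non-square indicators
   of y + 1 and y (resp. of x) are u and v; there F is a signed square. *)
Definition sols1 (u v : bool) (b : K) : {set K} :=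
  [set y | [&& nonsquare (y + 1) == u, nonsquare y == v &
              (-1) ^+ u * (y + 1) ^+ 2 + (-1) ^+ v * y ^+ 2 == b]].

Definition sols0 (v : bool) (b : K) : {set K} :=
  [set x | (nonsquare x == v) && (2 * ((-1) ^+ v * x ^+ 2) == b)].

Lemma cDelta1_le (b : K) :
  (cDelta F (-1)%R 1%R b <= #|sols1 false false b| + #|sols1 false true b|
                          + #|sols1 true false b| + #|sols1 true true b|)%N.
Proof.
apply: leq_trans (subset_leq_card (_ : _ \subset sols1 false false b
  :|: sols1 false true b :|: sols1 true false b :|: sols1 true true b)) _.
  apply/subsetP => y; rewrite !inE mulN1r opprK !pow_sign => /eqP <-.
  by case: (nonsquare (y + 1)); case: (nonsquare y); rewrite !eqxx ?orbT.
apply: (leq_trans (leq_card_setU _ _).1); rewrite leq_add2r.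
apply: (leq_trans (leq_card_setU _ _).1); rewrite leq_add2r.
exact: (leq_card_setU _ _).1.
Qed.

Lemma cDelta0_le (b : K) :
  (cDelta F (-1)%R 0%R b <= #|sols0 false b| + #|sols0 true b|)%N.
Proof.
apply: leq_trans (leq_card_setU _ _).1; apply/subset_leq_card/subsetP => x.
rewrite !inE addr0 mulN1r opprK pow_sign => /eqP <-.
by case: (nonsquare x); rewrite !mulr_natl !mulr2n !eqxx ?orbT.
Qed.

Lemma sols1_diag_pair {u : bool} {b y z : K} :
  y \in sols1 u u b -> z \in sols1 u u b -> z = y \/ z = - 1 - y.
Proof.
rewrite !inE => /and3P[_ _ /eqP Ey] /and3P[_ _ /eqP Ez].
apply: (eq_sqrDsqr_shift two_neq0); apply: (mulfI (negbT (signr_eq0 _ u))).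
by rewrite !mulrDr Ey Ez.
Qed.

Lemma card_sols1_diag (u : bool) (b : K) : (#|sols1 u u b| <= 2)%N.
Proof. exact: card_le2_of _ (@sols1_diag_pair u b). Qed.

Lemma card_sols1_offdiag (u : bool) (b : K) : (#|sols1 u (~~ u) b| <= 1)%N.
Proof.
apply/card_le1_eqP => y z; rewrite !inE => /and3P[_ _ /eqP Ey] /and3P[_ _ /eqP Ez].
apply: (eq_sqrBsqr_shift two_neq0); apply: (mulfI (negbT (signr_eq0 _ u))).
by rewrite !mulrBr -!mulNr -signrN Ey Ez.
Qed.

Lemma card_sols1_diag_le1 (u : bool) (b : K) :
  nonsquare (-1) -> (#|sols1 u u b| <= 1)%N.
Proof.
move=> ns_m1; apply/card_le1_eqP => y z Hy Hz.
have [//|z_refl] := sols1_diag_pair Hy Hz.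
move: Hy Hz; rewrite !inE => /and3P[_ /eqP yu _] /and3P[/eqP z1u /eqP zu _].
have z1E : z + 1 = - y by rewrite z_refl; ring.
have [y0|y0] := eqVneq y 0.
  by move: z1u zu; rewrite z1E z_refl y0 oppr0 addr0 nonsquare0 ns_m1 => <-.
by move: z1u; rewrite z1E nonsquareN // ns_m1 yu; case: u {yu zu}.
Qed.

Lemma sols1_ff_ft_excl (b : K) : forall y z,
  y \in sols1 false false b -> z \in sols1 false true b -> False.
Proof.
move=> y z; rewrite !inE /= expr0 expr1 !mul1r mulN1r.
move=> /and3P[/eqP/negbT y1 /eqP/negbT y0 /eqP Ey] /and3P[_ /eqP z_ns /eqP Ez].
have zE : z = y * (y + 1) by apply: (sqrDsqr_shift_eq_sqrB two_neq0); rewrite Ey Ez.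
by move: (squareM y0 y1); rewrite -zE z_ns.
Qed.

Lemma sols1_ff_tf_excl (b : K) : ~~ nonsquare (-1) -> forall y z,
  y \in sols1 false false b -> z \in sols1 true false b -> False.
Proof.
move=> sq_m1 y z; rewrite !inE /= expr0 expr1 !mul1r mulN1r.
move=> /and3P[/eqP/negbT y1 /eqP/negbT y0 /eqP Ey] /and3P[/eqP z1_ns _ /eqP Ez].
have z1E : z + 1 = - (y * (y + 1)).
  by apply: (sqrDsqr_shift_eq_sqrBN two_neq0); rewrite Ey -Ez addrC.
by move: (squareM y0 y1); rewrite -(nonsquareN_even _ sq_m1) -z1E z1_ns.
Qed.

Lemma sols1_tt_ft_excl (b : K) : nonsquare (-1) -> forall y z,
  y \in sols1 true true b -> z \in sols1 false true b -> False.
Proof.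
move=> ns_m1 y z; rewrite !inE /= expr0 expr1 mul1r !mulN1r.
move=> /and3P[/eqP y1_ns /eqP y_ns /eqP Ey] /and3P[/eqP z1_sq _ /eqP Ez].
have z1E : z + 1 = - (y * (y + 1)).
  apply: (sqrDsqr_shift_eq_sqrBN two_neq0).
  by rewrite -opprB Ez -Ey; ring.
have yy1 : y * (y + 1) != 0 by rewrite mulf_neq0 ?nonsquare_neq0 ?y_ns ?y1_ns.
move: z1_sq; rewrite z1E nonsquareN // nonsquareM ?nonsquare_neq0 ?y_ns ?y1_ns //.
by rewrite ns_m1.
Qed.

Lemma sols0_pair {v : bool} {b x z : K} :
  x \in sols0 v b -> z \in sols0 v b -> z = x \/ z = - x.
Proof.
rewrite !inE => /andP[_ /eqP Ex] /andP[_ /eqP Ez].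
have /eqP : z ^+ 2 = x ^+ 2.
  by apply: (mulfI (negbT (signr_eq0 _ v))); apply: (mulfI two_neq0); rewrite Ex Ez.
by rewrite eqf_sqr => /orP[] /eqP; [left | right].
Qed.

Lemma card_sols0 (v : bool) (b : K) : (#|sols0 v b| <= 2)%N.
Proof. exact: card_le2_of _ (@sols0_pair v b). Qed.

Lemma card_sols0_le1 (v : bool) (b : K) : nonsquare (-1) -> (#|sols0 v b| <= 1)%N.
Proof.
move=> ns_m1; apply/card_le1_eqP => x z Hx Hz.
have [//|zE] := sols0_pair Hx Hz.
have [x0|x0] := eqVneq x 0; first by rewrite zE x0 oppr0.
move: Hx Hz; rewrite !inE zE => /andP[/eqP xv _] /andP[/eqP zv _].
by move: zv; rewrite nonsquareN // ns_m1 xv; case: v {xv}.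
Qed.

Lemma cDelta_pow_le4 (a b : K) : ~~ nonsquare (-1) -> (cDelta F (-1)%R a b <= 4)%N.
Proof.
move=> sq_m1; have [->|a0] := eqVneq a 0.
  by have := cDelta0_le b; have := card_sols0 false b; have := card_sols0 true b; lia.
rewrite cDelta_pow_scale //; set b' := b / _.
have ff := card_sols1_diag false b'; have tt := card_sols1_diag true b'.
have ft : (#|sols1 false true b'| <= 1)%N := card_sols1_offdiag false b'.
have tf : (#|sols1 true false b'| <= 1)%N := card_sols1_offdiag true b'.
have := cards0_of_excl (sols1_ff_ft_excl b').
have := cards0_of_excl (sols1_ff_tf_excl b' sq_m1).
by have := cDelta1_le b'; lia.
Qed.

Lemma cDelta_pow_le3 (a b : K) : nonsquare (-1) -> (cDelta F (-1)%R a b <= 3)%N.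
Proof.
move=> ns_m1; have [->|a0] := eqVneq a 0.
  have := cDelta0_le b; have := card_sols0_le1 false b ns_m1.
  by have := card_sols0_le1 true b ns_m1; lia.
rewrite cDelta_pow_scale //; set b' := b / _.
have ff := card_sols1_diag_le1 false b' ns_m1.
have tt := card_sols1_diag_le1 true b' ns_m1.
have ft : (#|sols1 false true b'| <= 1)%N := card_sols1_offdiag false b'.
have tf : (#|sols1 true false b'| <= 1)%N := card_sols1_offdiag true b'.
have := cards0_of_excl (sols1_ff_ft_excl b').
have := cards0_of_excl (sols1_tt_ft_excl b' ns_m1).
by have := cDelta1_le b'; lia.
Qed.

End QuadraticCharacterPower.

Theorem theorem7 (p n : nat) (K : finFieldType) :
  prime p -> (3 < p)%N -> (0 < n)%N -> #|K| = (p ^ n)%N ->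
  let d := ((p ^ n + 3) %/ 2)%N in
  ((p ^ n %% 4 = 1)%N -> (cDU (fun x : K => x ^+ d) (-1 : K)%R <= 4)%N) /\
  ((p ^ n %% 4 = 3)%N -> (cDU (fun x : K => x ^+ d) (-1 : K)%R <= 3)%N).
Proof.
move=> p_pr p_gt3 _ cardK d.
have oddK : odd #|K|.
  rewrite cardK oddX; case: (even_prime p_pr) => [p2|->]; last by rewrite orbT.
  by rewrite p2 in p_gt3.
have -> : d = (#|K|./2 + 2)%N.
  by have := card_oddE oddK; rewrite /d -cardK; lia.
split=> q_mod4; apply: cDU_leq => a b.
  by apply: cDelta_pow_le4; rewrite // nonsquareN1E // cardK q_mod4.
by apply: cDelta_pow_le3; rewrite // nonsquareN1E // cardK q_mod4.
Qed.
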